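(* Let $k\ge2$ and $\alpha_2,\alpha_3$ be positive integers with $\alpha_2,\alpha_3$ coprime. The Koras-Russell threefold of the first kind $X=\{x+x^ky+z^{\alpha_2}+t^{\alpha_3}=0\}\subset\mathbb{A}^4=\mathrm{Spec}(\mathbb{C}[x,y,z,t])$, endowed with the hyperbolic $\mathbb{G}_m$-action induced by $\lambda\cdot(x,y,z,t)=(\lambda^{\alpha_2\alpha_3}x,\lambda^{-(k-1)\alpha_2\alpha_3}y,\lambda^{\alpha_3}z,\lambda^{\alpha_2}t)$, is $\mathbb{G}_m$-linearly uniformly rational.
   Context: A $\mathbb{G}_m$-variety $X$ is $\mathbb{G}_m$-linearly rational at $x\in X$ if there exist a $\mathbb{G}_m$-stable open neighborhood $U_x$ of $x$, a linear $\mathbb{G}_m$-representation $V\simeq\mathbb{A}^n$ and a $\mathbb{G}_m$-stable open subset $U'\subset V$ with $U_x$ equivariantly isomorphic to $U'$; $X$ is $\mathbb{G}_m$-linearly uniformly rational if this holds at every point of $X$. *)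

From mathcomp Require Import all_boot all_algebra.
From mathcomp Require Import Rstruct complex.
From Stdlib Require Import Reals.

Set Implicit Arguments.
Unset Strict Implicit.
Unset Printing Implicit Defensive.

Import GRing.Theory.
Local Open Scope ring_scope.

Definition C : closedFieldType := complex R.

Definition pt (n : nat) := 'I_n -> C.
Definition subset_of (n : nat) := pt n -> Prop.

Inductive polyfun (n : nat) : (pt n -> C) -> Prop :=
  | pf_const (c : C) : polyfun (fun _ => c)
  | pf_coord (i : 'I_n) : polyfun (fun p => p i)
  | pf_add f g : polyfun f -> polyfun g -> polyfun (fun p => f p + g p)
  | pf_mul f g : polyfun f -> polyfun g -> polyfun (fun p => f p * g p)
  | pf_ext f g : polyfun f -> (forall p, f p = g p) -> polyfun g.

Definition zclosed (n : nat) (Z : subset_of n) : Prop :=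
  exists S : (pt n -> C) -> Prop,
    (forall f, S f -> polyfun f) /\
    (forall p, Z p <-> (forall f, S f -> f p = 0)).

Definition open_in (n : nat) (Y U : subset_of n) : Prop :=
  exists Z : subset_of n, zclosed Z /\ (forall p, U p <-> (Y p /\ ~ Z p)).

Definition regular_fun (n : nat) (U : subset_of n) (h : pt n -> C) : Prop :=
  forall p, U p -> exists W : subset_of n,
    open_in U W /\ W p /\
    exists f g : pt n -> C, polyfun f /\ polyfun g /\
      (forall q, W q -> g q != 0 /\ h q = f q / g q).

Definition regular_map (n m : nat) (U : subset_of n) (U' : subset_of m)
    (phi : pt n -> pt m) : Prop :=
  (forall p, U p -> U' (phi p)) /\ (forall j, regular_fun U (fun p => phi p j)).

(* A G_m = C^* action on (a subset of) A^n, given as a map C -> pt n -> pt n,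
   only the values at lambda != 0 matter. *)
Definition gm_act (n : nat) := C -> pt n -> pt n.

Definition gm_stable (n : nat) (U : subset_of n) (a : gm_act n) : Prop :=
  forall (l : C) p, l != 0 -> U p -> U (a l p).

Definition gm_equiv_iso (n m : nat) (U : subset_of n) (a : gm_act n)
    (U' : subset_of m) (b : gm_act m) : Prop :=
  exists (phi : pt n -> pt m) (psi : pt m -> pt n),
    regular_map U U' phi /\ regular_map U' U psi /\
    (forall p, U p -> forall i, psi (phi p) i = p i) /\
    (forall q, U' q -> forall j, phi (psi q) j = q j) /\
    (forall (l : C) p, l != 0 -> U p -> forall j, phi (a l p) j = b l (phi p) j).

Definition laurent (h : C -> C) : Prop :=
  exists (N M : nat) (c : 'I_N -> C),
    forall l : C, l != 0 -> h l = (\sum_(k < N) c k * l ^+ k) / l ^+ M.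

Definition linear_rep (n : nat) (rho : C -> 'M[C]_n) : Prop :=
  (forall i j, laurent (fun l => rho l i j)) /\
  rho 1 = 1%:M /\
  (forall l m : C, l != 0 -> m != 0 -> rho (l * m) = rho l *m rho m).

Definition rep_act (n : nat) (rho : C -> 'M[C]_n) : gm_act n :=
  fun l v i => \sum_(j < n) rho l i j * v j.

Definition whole (n : nat) : subset_of n := fun _ => True.

Definition gm_linearly_rational_at (N : nat) (X : subset_of N) (a : gm_act N)
    (x : pt N) : Prop :=
  exists Ux : subset_of N,
    open_in X Ux /\ gm_stable Ux a /\ Ux x /\
    exists (n : nat) (rho : C -> 'M[C]_n) (U' : subset_of n),
      linear_rep rho /\ open_in (@whole n) U' /\ gm_stable U' (rep_act rho) /\
      gm_equiv_iso Ux a U' (rep_act rho).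

Definition gm_linearly_uniformly_rational (N : nat) (X : subset_of N)
    (a : gm_act N) : Prop :=
  forall x, X x -> gm_linearly_rational_at X a x.

Definition cx : 'I_4 := @Ordinal 4 0 isT.
Definition cy : 'I_4 := @Ordinal 4 1 isT.
Definition cz : 'I_4 := @Ordinal 4 2 isT.
Definition ct : 'I_4 := @Ordinal 4 3 isT.

Definition mkpt4 (x y z t : C) : pt 4 :=
  fun i => match val i with 0 => x | 1 => y | 2 => z | _ => t end.

Definition KR (k a2 a3 : nat) : subset_of 4 :=
  fun p => p cx + p cx ^+ k * p cy + p cz ^+ a2 + p ct ^+ a3 = 0.

Definition KR_act (k a2 a3 : nat) : gm_act 4 :=
  fun l p => mkpt4 (l ^+ (a2 * a3) * p cx)
                   ((l ^+ ((k - 1) * a2 * a3))^-1 * p cy)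
                   (l ^+ a3 * p cz)
                   (l ^+ a2 * p ct).

(* The function u = 1 + x^(k-1) y is invariant under the action, and X is
   covered by the two stable basic opens {x <> 0} and {u <> 0}, since u = 1 where
   x = 0.
   On {x <> 0} the equation can be solved for y, so (x, z, t) identifies it with
   {x <> 0} in the representation of weights (a2 a3, a3, a2).  On X the equation
   reads x u = -(z^a2 + t^a3); hence (y / u^(k-1), z, t) identifies {u <> 0} with
   the basic open {w <> 0}, w = 1 + (-(z^a2 + t^a3))^(k-1) v, of the representation
   of weights (-(k-1) a2 a3, a3, a2), the inverse being
   (v, z, t) |-> (-(z^a2 + t^a3) / w, v w^(k-1), z, t). *)

From mathcomp Require Import all_boot all_algebra.
From mathcomp Require Import Rstruct complex ring.

Set Implicit Arguments.
Unset Strict Implicit.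
Unset Printing Implicit Defensive.

Import GRing.Theory.
Local Open Scope ring_scope.

Lemma polyfunN n (f : pt n -> C) : polyfun f -> polyfun (fun p => - f p).
Proof.
move=> pf; apply: (@pf_ext _ (fun p => -1 * f p)); last by move=> p; rewrite mulN1r.
by apply: pf_mul => //; exact: pf_const.
Qed.

Lemma polyfunX n (f : pt n -> C) e : polyfun f -> polyfun (fun p => f p ^+ e).
Proof.
move=> pf; elim: e => [|e IHe].
  by apply: (@pf_ext _ (fun _ => 1)) => [|p]; [exact: pf_const | rewrite expr0].
by apply: (@pf_ext _ (fun p => f p * f p ^+ e)) => [|p]; [exact: pf_mul | rewrite exprS].
Qed.

Ltac polyfun_auto := repeat first
  [ apply: pf_add | apply: pf_mul | apply: polyfunX | apply: polyfunN
  | apply: pf_coord | apply: pf_const ].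

Lemma zclosed_zero_locus n (f : pt n -> C) : polyfun f -> zclosed (fun p => f p = 0).
Proof.
move=> pf; exists (fun g => g = f); split; first by move=> g ->.
by move=> p; split => [fp0 g -> // | Sp0]; exact: Sp0.
Qed.

Definition basic_open n (Y : subset_of n) (f : pt n -> C) : subset_of n :=
  fun p => Y p /\ f p != 0.

Lemma open_in_basic n (Y : subset_of n) (f : pt n -> C) :
  polyfun f -> open_in Y (basic_open Y f).
Proof.
move=> pf; exists (fun p => f p = 0); split; first exact: zclosed_zero_locus.
by move=> p; split=> -[Yp fp]; split => //; apply/eqP.
Qed.

Lemma open_in_refl n (U : subset_of n) : open_in U U.
Proof.
exists (fun _ => (1 : C) = 0); split; first by apply: zclosed_zero_locus; polyfun_auto.
by move=> p; split => [Up | []//]; split => //; apply/eqP; rewrite oner_eq0.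
Qed.

Lemma regular_fun_div n (U : subset_of n) (h f g : pt n -> C) :
  polyfun f -> polyfun g -> (forall q, U q -> g q != 0 /\ h q = f q / g q) ->
  regular_fun U h.
Proof.
move=> pf pg hE p Up; exists U; split; first exact: open_in_refl.
by split => //; exists f, g.
Qed.

Lemma regular_fun_poly n (U : subset_of n) (h : pt n -> C) :
  polyfun h -> regular_fun U h.
Proof.
move=> ph; apply: (@regular_fun_div _ _ _ h (fun _ => 1)) => //; first exact: pf_const.
by move=> q _; rewrite oner_eq0 divr1.
Qed.

Lemma laurent_eq h g :
  (forall l, l != 0 -> h l = g l) -> laurent g -> laurent h.
Proof.
by move=> hg [N [M [c gE]]]; exists N, M, c => l l0; rewrite hg ?gE.
Qed.

Lemma laurent_mulrn h (b : bool) : laurent h -> laurent (fun l => h l *+ b).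
Proof.
case: b => [lh|_]; first exact: lh.
by exists 0%N, 0%N, (fun _ => 0) => l _; rewrite big_ord0 mul0r.
Qed.

Lemma laurent_exprz (z : int) : laurent (fun l => l ^ z).
Proof.
case: z => e.
  exists e.+1, 0%N, (fun i : 'I_e.+1 => (val i == e)%:R) => l _.
  rewrite expr0 divr1 big_ord_recr big1 => [|i _].
    by rewrite /= eqxx add0r mul1r.
  by rewrite /= (ltn_eqF (ltn_ord i)) mul0r.
by exists 1%N, e.+1, (fun _ => 1) => l _; rewrite big_ord1 expr0 mulr1 div1r.
Qed.

Definition weight_rep n (w : 'I_n -> int) : C -> 'M[C]_n :=
  fun l => diag_mx (\row_i l ^ w i).

Lemma rep_act_weight n (w : 'I_n -> int) l v i :
  rep_act (weight_rep w) l v i = l ^ w i * v i.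
Proof.
rewrite /rep_act /weight_rep (bigD1 i) // big1 ?addr0 => [|j ji].
  by rewrite !mxE eqxx /= addr0.
by rewrite !mxE eq_sym (negbTE ji) mulr0n mul0r.
Qed.

Lemma linear_rep_weight n (w : 'I_n -> int) : linear_rep (weight_rep w).
Proof.
split; [|split].
- move=> i j; apply: (@laurent_eq _ (fun l => l ^ w i *+ (i == j))).
    by move=> l _; rewrite /weight_rep !mxE.
  exact/laurent_mulrn/laurent_exprz.
- apply/matrixP => i j; rewrite /weight_rep !mxE exp1rz.
  by case: (i == j).
- move=> l m l0 m0; rewrite /weight_rep mul_diag_mx.
  apply/matrixP => i j; rewrite !mxE exprzMl ?unitfE //.
  by case: eqVneq => [->|_]; rewrite ?mulr0n ?mulr0.
Qed.

Lemma gm_linearly_rational_at_basic_chart N (X : subset_of N) (a : gm_act N)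
    (f : pt N -> C) n (w : 'I_n -> int) (g : pt n -> C) x :
  polyfun f -> polyfun g -> X x -> f x != 0 ->
  gm_stable (basic_open X f) a ->
  gm_stable (basic_open (@whole n) g) (rep_act (weight_rep w)) ->
  gm_equiv_iso (basic_open X f) a (basic_open (@whole n) g) (rep_act (weight_rep w)) ->
  gm_linearly_rational_at X a x.
Proof.
move=> pf pg Xx fx sU sU' iso; exists (basic_open X f).
split; first exact: open_in_basic.
do 2!split => //; exists n, (weight_rep w), (basic_open (@whole n) g).
split; first exact: linear_rep_weight.
by split; first exact: open_in_basic.
Qed.

Definition o0 : 'I_3 := @Ordinal 3 0 isT.
Definition o1 : 'I_3 := @Ordinal 3 1 isT.
Definition o2 : 'I_3 := @Ordinal 3 2 isT.

Definition mkpt3 (u z t : C) : pt 3 :=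
  fun i => match val i with 0 => u | 1 => z | _ => t end.

Lemma forall_ord3 (P : 'I_3 -> Prop) : P o0 -> P o1 -> P o2 -> forall i, P i.
Proof.
move=> P0 P1 P2 [[|[|[|//]]] i3].
- by rewrite (_ : Ordinal i3 = o0) //; apply: val_inj.
- by rewrite (_ : Ordinal i3 = o1) //; apply: val_inj.
- by rewrite (_ : Ordinal i3 = o2) //; apply: val_inj.
Qed.

Lemma forall_ord4 (P : 'I_4 -> Prop) : P cx -> P cy -> P cz -> P ct -> forall i, P i.
Proof.
move=> Px Py Pz Pt [[|[|[|[|//]]]] i4].
- by rewrite (_ : Ordinal i4 = cx) //; apply: val_inj.
- by rewrite (_ : Ordinal i4 = cy) //; apply: val_inj.
- by rewrite (_ : Ordinal i4 = cz) //; apply: val_inj.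
- by rewrite (_ : Ordinal i4 = ct) //; apply: val_inj.
Qed.

Lemma exprMn_exprM (l u : C) e f : (l ^+ e * u) ^+ f = l ^+ (f * e) * u ^+ f.
Proof. by rewrite exprMn -exprM mulnC. Qed.

Section KorasRussell.

(* [k] is the paper's k - 1. *)
Variables k a2 a3 : nat.

Local Notation X := (KR k.+1 a2 a3).
Local Notation act := (KR_act k.+1 a2 a3).

Definition kr_u (p : pt 4) : C := 1 + p cx ^+ k * p cy.

Lemma KRE p : X p <-> p cx * kr_u p + (p cz ^+ a2 + p ct ^+ a3) = 0.
Proof.
suff -> : p cx * kr_u p + (p cz ^+ a2 + p ct ^+ a3) =
  p cx + p cx ^+ k.+1 * p cy + p cz ^+ a2 + p ct ^+ a3 by [].
by rewrite /kr_u exprS; ring.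
Qed.

Lemma KR_zt p : X p -> p cz ^+ a2 + p ct ^+ a3 = - (p cx * kr_u p).
Proof. by move/KRE/eqP; rewrite addrC addr_eq0 => /eqP. Qed.

Lemma expr_kr_weight (l : C) : l ^+ (k * a2 * a3) = (l ^+ (a2 * a3)) ^+ k.
Proof. by rewrite -exprM (mulnC (a2 * a3)) mulnA. Qed.

Lemma KR_actE l p : act l p =
  mkpt4 (l ^+ (a2 * a3) * p cx) ((l ^+ (a2 * a3)) ^- k * p cy)
        (l ^+ a3 * p cz) (l ^+ a2 * p ct).
Proof. by rewrite /KR_act subSS subn0 expr_kr_weight. Qed.

Lemma kr_u_act l p : l != 0 -> kr_u (act l p) = kr_u p.
Proof.
move=> l0; rewrite /kr_u KR_actE /= exprMn mulrACA -exprM mulnC exprM.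
by rewrite divff ?mul1r // expf_neq0 // expf_neq0.
Qed.

Lemma KR_stable : gm_stable X act.
Proof.
move=> l p l0 /KRE Xp; apply/KRE; rewrite kr_u_act //.
rewrite KR_actE /= !exprMn_exprM [(a2 * a3)%N]mulnC.
by rewrite -mulrA -!mulrDr Xp mulr0.
Qed.

Definition chartA (p : pt 4) : pt 3 := mkpt3 (p cx) (p cz) (p ct).

Definition chartA_inv (q : pt 3) : pt 4 :=
  mkpt4 (q o0) (- (q o0 + q o1 ^+ a2 + q o2 ^+ a3) / q o0 ^+ k.+1) (q o1) (q o2).

Definition weightA (i : 'I_3) : int := [:: (a2 * a3)%N%:Z; a3%:Z; a2%:Z]`_i.

Lemma chartA_iso :
  gm_equiv_iso (basic_open X (fun p => p cx)) act
    (basic_open (@whole 3) (fun q => q o0)) (rep_act (weight_rep weightA)).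
Proof.
exists chartA, chartA_inv; split; [|split; [|split; [|split]]].
- split=> [p [_ x0] // |].
  by apply: forall_ord3; apply: regular_fun_poly; polyfun_auto.
- split=> [q [_ q0]|].
    by split=> //; rewrite /KR /chartA_inv /mkpt4 /=; field; rewrite expf_neq0.
  apply: forall_ord4; rewrite /chartA_inv /=; try by apply: regular_fun_poly; polyfun_auto.
  apply: (@regular_fun_div _ _ _ (fun q => - (q o0 + q o1 ^+ a2 + q o2 ^+ a3))
                                 (fun q => q o0 ^+ k.+1)); try polyfun_auto.
  by move=> q [_ q0]; rewrite expf_neq0.
- move=> p [Xp x0]; apply: forall_ord4 => //=.
  rewrite /chartA_inv /chartA /mkpt4 /mkpt3 /= -addrA KR_zt //.
  by rewrite /kr_u exprS; field; rewrite expf_neq0 ?x0.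
- by move=> q _; apply: forall_ord3.
- by move=> l p l0 _; apply: forall_ord3; rewrite rep_act_weight KR_actE.
Qed.

Lemma chartA_target_stable :
  gm_stable (basic_open (@whole 3) (fun q => q o0)) (rep_act (weight_rep weightA)).
Proof.
by move=> l q l0 [_ q0]; split=> //; rewrite rep_act_weight mulf_neq0 // expfz_neq0.
Qed.

Lemma KR_linearly_rational_at_x_neq0 x :
  X x -> x cx != 0 -> gm_linearly_rational_at X act x.
Proof.
move=> Xx x0; apply: (@gm_linearly_rational_at_basic_chart _ _ _ (fun p => p cx)
  _ weightA (fun q => q o0)) => //; try polyfun_auto.
- move=> l p l0 [Xp p0]; split; first exact: KR_stable.
  by rewrite KR_actE mulf_neq0 // expf_neq0.
- exact: chartA_target_stable.
- exact: chartA_iso.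
Qed.

Definition zt_sum (q : pt 3) : C := q o1 ^+ a2 + q o2 ^+ a3.

Definition chartB_u (q : pt 3) : C := 1 + (- zt_sum q) ^+ k * q o0.

Definition chartB (p : pt 4) : pt 3 := mkpt3 (p cy / kr_u p ^+ k) (p cz) (p ct).

Definition chartB_inv (q : pt 3) : pt 4 :=
  mkpt4 (- zt_sum q / chartB_u q) (q o0 * chartB_u q ^+ k) (q o1) (q o2).

Definition weightB (i : 'I_3) : int := [:: - (k * a2 * a3)%N%:Z; a3%:Z; a2%:Z]`_i.

Lemma chartB_u_chartB p : X p -> kr_u p != 0 -> chartB_u (chartB p) = kr_u p.
Proof.
move=> Xp u0; rewrite /chartB_u /zt_sum /chartB /mkpt3 /= KR_zt // opprK.
by rewrite exprMn -mulrA (mulrC (kr_u p ^+ k)) divfK // expf_neq0.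
Qed.

Lemma kr_u_chartB_inv q : chartB_u q != 0 -> kr_u (chartB_inv q) = chartB_u q.
Proof.
move=> w0; rewrite /kr_u /chartB_inv /mkpt4 /= expr_div_n.
move: (chartB_u q ^+ k) (expf_neq0 k w0) => W W0.
by rewrite /chartB_u /zt_sum; field.
Qed.

Lemma chartB_u_act l q :
  l != 0 -> chartB_u (rep_act (weight_rep weightB) l q) = chartB_u q.
Proof.
move=> l0; rewrite /chartB_u /zt_sum !rep_act_weight /= !exprMn_exprM.
rewrite /weightB /= -exprnN expr_kr_weight [(a3 * a2)%N]mulnC -mulrDr -mulrN.
by rewrite exprMn mulrACA mulrV ?mul1r // unitfE !expf_neq0.
Qed.

Local Notation UB := (basic_open X kr_u).
Local Notation UB' := (basic_open (@whole 3) chartB_u).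
Local Notation actB := (rep_act (weight_rep weightB)).

Lemma chartB_regular : regular_map UB UB' chartB.
Proof.
split=> [p [Xp u0] | ]; first by split=> //; rewrite chartB_u_chartB.
apply: forall_ord3; rewrite /chartB /mkpt3 /=; try by apply: regular_fun_poly; polyfun_auto.
apply: (@regular_fun_div _ _ _ (fun p => p cy) (fun p => kr_u p ^+ k)); rewrite /kr_u; try polyfun_auto.
by move=> p [_ u0]; rewrite expf_neq0.
Qed.

Lemma chartB_inv_regular : regular_map UB' UB chartB_inv.
Proof.
split=> [q [_ w0] | ].
  split; last by rewrite kr_u_chartB_inv.
  apply/KRE; rewrite kr_u_chartB_inv // /chartB_inv /mkpt4 /= divfK //.
  by rewrite /zt_sum addNr.
apply: forall_ord4; rewrite /chartB_inv /mkpt4 /=;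
  try by apply: regular_fun_poly; rewrite /chartB_u /zt_sum; polyfun_auto.
apply: (@regular_fun_div _ _ _ (fun q => - zt_sum q) chartB_u);
  rewrite /chartB_u /zt_sum; try polyfun_auto.
by move=> q [].
Qed.

Lemma chartB_invK p : UB p -> forall i, chartB_inv (chartB p) i = p i.
Proof.
move=> [Xp u0]; apply: forall_ord4 => //; rewrite /chartB_inv /mkpt4 /= chartB_u_chartB //.
  by rewrite /zt_sum /chartB /mkpt3 /= KR_zt // opprK mulfK.
by rewrite /chartB /mkpt3 /= divfK // expf_neq0.
Qed.

Lemma chartBK q : UB' q -> forall i, chartB (chartB_inv q) i = q i.
Proof.
move=> [_ w0]; apply: forall_ord3 => //.
by rewrite /chartB /mkpt3 /= kr_u_chartB_inv // /chartB_inv /mkpt4 /= mulfK // expf_neq0.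
Qed.

Lemma chartB_equivariant l p :
  l != 0 -> UB p -> forall i, chartB (act l p) i = actB l (chartB p) i.
Proof.
move=> l0 _; apply: forall_ord3;
  rewrite rep_act_weight /chartB /mkpt3 /= ?kr_u_act // KR_actE //=.
by rewrite /weightB /= -exprnN expr_kr_weight -mulrA.
Qed.

Lemma chartB_iso : gm_equiv_iso UB act UB' actB.
Proof.
exists chartB, chartB_inv; split; first exact: chartB_regular.
split; first exact: chartB_inv_regular.
split; first exact: chartB_invK.
split; first exact: chartBK.
exact: chartB_equivariant.
Qed.

Lemma chartB_target_stable : gm_stable UB' actB.
Proof. by move=> l q l0 [_ w0]; split=> //; rewrite chartB_u_act. Qed.

Lemma KR_linearly_rational_at_u_neq0 x :
  X x -> kr_u x != 0 -> gm_linearly_rational_at X act x.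
Proof.
move=> Xx u0; apply: (@gm_linearly_rational_at_basic_chart _ _ _ kr_u
  _ weightB chartB_u) => //; try by rewrite /kr_u /chartB_u /zt_sum; polyfun_auto.
- by move=> l p l0 [Xp p0]; split; [exact: KR_stable | rewrite kr_u_act].
- exact: chartB_target_stable.
- exact: chartB_iso.
Qed.

Lemma kr_u_x_eq0 p : (0 < k)%N -> p cx = 0 -> kr_u p = 1.
Proof. by move=> k0 x0; rewrite /kr_u x0 expr0n gtn_eqF // mul0r addr0. Qed.

Lemma KR_gm_linearly_uniformly_rational :
  (0 < k)%N -> gm_linearly_uniformly_rational X act.
Proof.
move=> k0 x Xx; have [x0|x0] := eqVneq (x cx) 0.
  by apply: KR_linearly_rational_at_u_neq0; rewrite // kr_u_x_eq0 // oner_eq0.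
exact: KR_linearly_rational_at_x_neq0.
Qed.

End KorasRussell.

Theorem theorem3p6 (k a2 a3 : nat) :
  (2 <= k)%N -> (0 < a2)%N -> (0 < a3)%N -> coprime a2 a3 ->
  gm_linearly_uniformly_rational (KR k a2 a3) (KR_act k a2 a3).
Proof. by case: k => [//|k] k2 _ _ _; apply: KR_gm_linearly_uniformly_rational. Qed.
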